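(* Let $\mathcal{A}$ be a unital algebra over a field $F$ with $\operatorname{char}(F)\neq2$ such that $\mathcal{A}=R(\mathcal{A})$. Then $\operatorname{QJDer}(\mathcal{A})=\operatorname{Cent}(\mathcal{A})+\operatorname{JDer}(\mathcal{A})$.
   Context: $R(\mathcal{A})$ is the subalgebra of $\mathcal{A}$ generated by all idempotents of $\mathcal{A}$. $x\circ y=xy+yx$. $\operatorname{QJDer}(\mathcal{A})$: linear $f:\mathcal{A}\to\mathcal{A}$ for which there is a linear $h$ with $f(x)\circ y+x\circ f(y)=h(x\circ y)$ for all $x,y$. $\operatorname{Cent}(\mathcal{A})$: linear $f$ with $f(xy)=f(x)y=xf(y)$. $\operatorname{JDer}(\mathcal{A})$: linear $d$ with $d(x\circ y)=d(x)\circ y+x\circ d(y)$. Sums of sets of maps are sets of pointwise sums. *)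

From HB Require Import structures.
From mathcomp Require Import all_boot all_order all_algebra.
Set Implicit Arguments. Unset Strict Implicit. Unset Printing Implicit Defensive.
Import GRing.Theory.
Local Open Scope ring_scope.

Section Defs.
Variables (F : fieldType) (A : algType F).

Definition jprod (x y : A) : A := x * y + y * x.

Definition is_linear_map (f : A -> A) : Prop :=
  forall (a : F) (x y : A), f (a *: x + y) = a *: f x + f y.

(* R(A): the subalgebra of A generated by all idempotents of A *)
Inductive in_idem_gen : A -> Prop :=
  | idg_idem e : e * e = e -> in_idem_gen e
  | idg_zero : in_idem_gen 0
  | idg_add x y : in_idem_gen x -> in_idem_gen y -> in_idem_gen (x + y)
  | idg_scale (a : F) x : in_idem_gen x -> in_idem_gen (a *: x)
  | idg_mul x y : in_idem_gen x -> in_idem_gen y -> in_idem_gen (x * y).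

Definition generated_by_idempotents : Prop := forall x : A, in_idem_gen x.

Definition is_QJDer (f : A -> A) : Prop :=
  is_linear_map f /\
  exists h : A -> A, is_linear_map h /\
    forall x y, jprod (f x) y + jprod x (f y) = h (jprod x y).

Definition is_Cent (f : A -> A) : Prop :=
  is_linear_map f /\ forall x y, f (x * y) = f x * y /\ f (x * y) = x * f y.

Definition is_JDer (d : A -> A) : Prop :=
  is_linear_map d /\ forall x y, d (jprod x y) = jprod (d x) y + jprod x (d y).

End Defs.

From HB Require Import structures.
From mathcomp Require Import all_boot all_order all_algebra.
Import GRing.Theory.
Local Open Scope ring_scope.

(* Let f be a quasi-Jordan derivation with companion h, and a := f 1.
   Comparing the defining identity at (x, 1) and at (e, e) for an idempotent e
   gives 2 (e o f e) = 2 f e + e o a; cutting this down to the Peirce corners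
   e _ (1 - e) and (1 - e) _ e shows e a (1 - e) = (1 - e) a e = 0, i.e. a
   commutes with e.  As the idempotents generate A, a is central, and then the
   identity at (x, 1) reads 2 h x = 2 (f x + a x).  Since char F <> 2, this
   makes x |-> f x - a x a Jordan derivation, while x |-> a x is in the
   centroid.  Conversely a centroid map c satisfies c x o y = x o c y =
   c (x o y), so c + d is quasi-Jordan with companion 2 c + d. *)

Section JordanProduct.
Local Set Implicit Arguments.
Local Unset Strict Implicit.

Variables (F : fieldType) (A : algType F).
Implicit Types (a e u x y z : A) (f g : A -> A).

Lemma linear_mapD f : is_linear_map f -> {morph f : x y / x + y}.
Proof. by move=> hf x y; rewrite -[x in LHS]scale1r hf scale1r. Qed.

Lemma linear_map0 f : is_linear_map f -> f 0 = 0.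
Proof. by move=> hf; apply: (@addrI _ (f 0)); rewrite -(linear_mapD hf) !addr0. Qed.

Lemma linear_mapMn f n : is_linear_map f -> {morph f : x / x *+ n}.
Proof.
move=> hf x; elim: n => [|n IHn]; first exact: linear_map0.
by rewrite !mulrS (linear_mapD hf) IHn.
Qed.

Lemma is_linear_mapD f g :
  is_linear_map f -> is_linear_map g -> is_linear_map (fun x => f x + g x).
Proof. by move=> hf hg k x y; rewrite hf hg scalerDr addrACA. Qed.

Lemma is_linear_mapB f g :
  is_linear_map f -> is_linear_map g -> is_linear_map (fun x => f x - g x).
Proof. by move=> hf hg k x y; rewrite hf hg scalerBr opprD addrACA. Qed.

Lemma is_linear_map_mull a : is_linear_map (fun x => a * x).
Proof. by move=> k x y; rewrite mulrDr scalerAr. Qed.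

Lemma jprodC x y : jprod x y = jprod y x.
Proof. exact: addrC. Qed.

Lemma jprodDl x y z : jprod (x + y) z = jprod x z + jprod y z.
Proof. by rewrite /jprod mulrDl mulrDr addrACA. Qed.

Lemma jprodDr x y z : jprod x (y + z) = jprod x y + jprod x z.
Proof. by rewrite /jprod mulrDl mulrDr addrACA. Qed.

Lemma jprodBl x y z : jprod (x - y) z = jprod x z - jprod y z.
Proof. by rewrite /jprod mulrBl mulrBr opprD addrACA. Qed.

Lemma jprodBr x y z : jprod x (y - z) = jprod x y - jprod x z.
Proof. by rewrite /jprod mulrBl mulrBr opprD addrACA. Qed.

Lemma jprod1r x : jprod x 1 = x *+ 2.
Proof. by rewrite /jprod mulr1 mul1r mulr2n. Qed.

Section Idempotent.
Variable e : A.
Hypothesis he : e * e = e.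

Lemma mulr_idem_compl : e * (1 - e) = 0.
Proof. by rewrite mulrBr mulr1 he subrr. Qed.

Lemma mulr_compl_idem : (1 - e) * e = 0.
Proof. by rewrite mulrBl mul1r he subrr. Qed.

Lemma jprod_idem : jprod e e = e *+ 2.
Proof. by rewrite /jprod he mulr2n. Qed.

Lemma peirce_jprodl u : e * jprod e u * (1 - e) = e * u * (1 - e).
Proof.
rewrite /jprod [e * (_ + _)]mulrDr [(_ + _) * _]mulrDl mulrA he.
by rewrite -[e * (u * e) * _]mulrA -[u * e * _]mulrA mulr_idem_compl !mulr0 addr0.
Qed.

Lemma peirce_jprodr u : (1 - e) * jprod e u * e = (1 - e) * u * e.
Proof.
rewrite /jprod [_ * (_ + _)]mulrDr [(_ + _) * e]mulrDl -!mulrA he.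
by rewrite mulrA mulr_compl_idem !mul0r add0r.
Qed.

Lemma commr_idem_of_peirce a :
  e * a * (1 - e) = 0 -> (1 - e) * a * e = 0 -> GRing.comm a e.
Proof.
rewrite /GRing.comm mulrBr mulr1 => /subr0_eq eaE.
rewrite !mulrBl !mul1r -mulrA => /subr0_eq ->.
by rewrite eaE mulrA.
Qed.

Lemma commr_idem_of_jprod u a :
  jprod e u *+ 2 = u *+ 2 + jprod e a -> GRing.comm a e.
Proof.
move=> E; apply: commr_idem_of_peirce.
- have := congr1 (fun z => e * z * (1 - e)) E.
  rewrite [e * (u *+ 2 + _)]mulrDr mulrDl !mulrnAr !mulrnAl !peirce_jprodl.
  by rewrite -[LHS]addr0 => /addrI <-.
- have := congr1 (fun z => (1 - e) * z * e) E.
  rewrite [(1 - e) * (u *+ 2 + _)]mulrDr mulrDl !mulrnAr !mulrnAl !peirce_jprodr.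
  by rewrite -[LHS]addr0 => /addrI <-.
Qed.

End Idempotent.

Lemma commr_in_idem_gen a :
  (forall e, e * e = e -> GRing.comm a e) ->
  forall x, in_idem_gen x -> GRing.comm a x.
Proof.
move=> comm_idem x; elim=> {x}.
- exact: comm_idem.
- exact: commr0.
- by move=> x y _ hx _ hy; apply: commrD.
- by move=> k x _ hx; rewrite /GRing.comm -scalerAr -scalerAl hx.
- by move=> x y _ hx _ hy; apply: commrM.
Qed.

Lemma Cent_jprodl c (hc : is_Cent c) x y : jprod (c x) y = c (jprod x y).
Proof. by rewrite /jprod (linear_mapD hc.1) (hc.2 x y).1 (hc.2 y x).2. Qed.

Lemma Cent_jprodr c (hc : is_Cent c) x y : jprod x (c y) = c (jprod x y).
Proof. by rewrite /jprod (linear_mapD hc.1) (hc.2 x y).2 (hc.2 y x).1. Qed.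

Lemma is_Cent_mull a : (forall x, GRing.comm a x) -> is_Cent (fun x => a * x).
Proof.
move=> ac; split=> [|x y]; first exact: is_linear_map_mull.
by rewrite mulrA; split=> //; rewrite ac -mulrA ac.
Qed.

Lemma Cent_add_JDer_QJDer c d f :
  is_Cent c -> is_JDer d -> (forall x, f x = c x + d x) -> is_QJDer f.
Proof.
move=> hc [hd dJ] fE; split.
  by move=> k x y; rewrite !fE (is_linear_mapD hc.1 hd).
exists (fun x => c x + c x + d x); split.
  exact: is_linear_mapD (is_linear_mapD hc.1 hc.1) hd.
move=> x y; rewrite !fE jprodDl jprodDr addrACA dJ.
by rewrite (Cent_jprodl hc) (Cent_jprodr hc).
Qed.

Section QuasiJordanDerivation.
Variables f h : A -> A.
Hypotheses (hf : is_linear_map f) (hh : is_linear_map h).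
Hypothesis fh : forall x y, jprod (f x) y + jprod x (f y) = h (jprod x y).

Lemma QJDer_jprod1r x : f x *+ 2 + jprod x (f 1) = h x *+ 2.
Proof. by rewrite -(linear_mapMn _ hh) -[x *+ 2]jprod1r -fh jprod1r. Qed.

Lemma QJDer_commr_idem e : e * e = e -> GRing.comm (f 1) e.
Proof.
move=> he; apply: (commr_idem_of_jprod (u := f e) he).
by rewrite QJDer_jprod1r -(linear_mapMn _ hh) -(jprod_idem he) -fh jprodC mulr2n.
Qed.

Lemma QJDer_f1_central :
  generated_by_idempotents A -> forall x, GRing.comm (f 1) x.
Proof. by move=> hR x; apply: commr_in_idem_gen (hR x); apply: QJDer_commr_idem. Qed.

Hypothesis f1_central : forall x, GRing.comm (f 1) x.

Lemma QJDer_companionE : (2 : F) != 0 -> forall x, h x = f x + f 1 * x.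
Proof.
move=> hchar x; apply: (scalerI hchar).
by rewrite !scaler_nat -QJDer_jprod1r mulrnDl /jprod -f1_central mulr2n.
Qed.

Lemma QJDer_sub_mull_JDer :
  (2 : F) != 0 -> is_JDer (fun x => f x - f 1 * x).
Proof.
move=> hchar; split; first exact: is_linear_mapB hf (is_linear_map_mull _).
have hc := is_Cent_mull f1_central.
move=> x y; rewrite jprodBl jprodBr addrACA -opprD fh QJDer_companionE //.
by rewrite (Cent_jprodl hc) (Cent_jprodr hc) /= opprD addrA addrK.
Qed.

End QuasiJordanDerivation.

End JordanProduct.

Theorem proposition4p2 (F : fieldType) (A : algType F)
  (hchar : (2 : F) != 0) (hR : generated_by_idempotents A) :
  forall f : A -> A,
    is_QJDer f <->
    exists c d : A -> A, is_Cent c /\ is_JDer d /\ forall x, f x = c x + d x.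
Proof.
move=> f; split=> [[hf [h [hh fh]]] | [c [d [hc [hd fE]]]]].
- have f1_central := QJDer_f1_central hh fh hR.
  exists (fun x => f 1 * x), (fun x => f x - f 1 * x).
  split; first exact: is_Cent_mull.
  split; first exact: QJDer_sub_mull_JDer hf hh fh f1_central hchar.
  by move=> x; rewrite addrC subrK.
- exact: Cent_add_JDer_QJDer hc hd fE.
Qed.
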